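(* Let $B$ be any group and $p\ge 2$ an integer. Suppose $w\in (B\wr C_p)'$ is given by the wreath recursion $$w=(r_1,r_2,\dots,r_{p-1},\; r_1^{-1}\cdots r_{p-1}^{-1}[f,g])$$ with $r_1,\dots,r_{p-1},f,g\in B$. Define elements of $B$ by $a_{1,i}=e$ for $1\le i\le p-1$; $a_{2,1}=(f^{-1})^{r_1^{-1}\cdots r_{p-1}^{-1}}$; $a_{2,i}=r_{i-1}a_{2,i-1}$ for $2\le i\le p$; $a_{1,p}=g^{a_{2,p}^{-1}}$. Then $$w=[(a_{1,1},\dots,a_{1,p})\sigma,\ (a_{2,1},\dots,a_{2,p})].$$
   Context: $C_p=\langle\sigma\rangle$ with $\sigma=(1,2,\dots,p)$ acting on $\{1,\dots,p\}$. Elements of $B\wr C_p=B^p\rtimes C_p$ are written $(b_1,\dots,b_p)\tau$, with multiplication $(g_1,\dots,g_p)\tau\cdot(h_1,\dots,h_p)\rho=(g_1h_{\tau(1)},\dots,g_ph_{\tau(p)})\tau\rho$; $(b_1,\dots,b_p)$ denotes an element with trivial $C_p$-part. Conventions: $[a,b]=aba^{-1}b^{-1}$ and $a^b=bab^{-1}$. *)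

From mathcomp Require Import all_boot all_algebra.
Set Implicit Arguments. Unset Strict Implicit. Unset Printing Implicit Defensive.
Import GRing.Theory.

Record Grp := {
  car :> Type;
  gmul : car -> car -> car;
  ginv : car -> car;
  gone : car;
  gmulA : forall x y z, gmul x (gmul y z) = gmul (gmul x y) z;
  gmul1 : forall x, gmul gone x = x;
  gmulV : forall x, gmul (ginv x) x = gone }.

Definition gcomm (B : Grp) (a b : B) : B :=
  gmul (gmul (gmul a b) (ginv a)) (ginv b).
Definition gconj (B : Grp) (a b : B) : B := gmul (gmul b a) (ginv b).

(* Wreath product B wr C_p, p >= 2.  Positions 1..p are encoded by 'Z_p
   (position j+1 <-> j), sigma = (1,2,...,p) acts as i |-> i + 1, and the
   element sigma^k of C_p is encoded by k : 'Z_p, acting as i |-> i + k.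
   An element (b_1,...,b_p) tau is the pair (b, tau). *)
Definition wr (B : Grp) (p : nat) := ({ffun 'Z_p -> B} * 'Z_p)%type.

Definition wmul (B : Grp) (p : nat) (x y : wr B p) : wr B p :=
  ([ffun i => gmul (x.1 i) (y.1 (i + x.2)%R)], (x.2 + y.2)%R).

Definition winv (B : Grp) (p : nat) (x : wr B p) : wr B p :=
  ([ffun j => ginv (x.1 (j - x.2)%R)], (- x.2)%R).

Definition wcomm (B : Grp) (p : nat) (x y : wr B p) : wr B p :=
  wmul (wmul (wmul x y) (winv x)) (winv y).

Fixpoint prodinv (B : Grp) (r : nat -> B) (m : nat) : B :=
  match m with
  | 0 => gone B
  | m'.+1 => gmul (prodinv r m') (ginv (r m'.+1))
  end.

(* a2aux k = a_{2,k+1}:  a_{2,1} = (f^{-1})^{r_1^{-1}...r_{p-1}^{-1}},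
   a_{2,i} = r_{i-1} a_{2,i-1} *)
Fixpoint a2aux (B : Grp) (p : nat) (r : nat -> B) (f : B) (k : nat) : B :=
  match k with
  | 0 => gconj (ginv f) (prodinv r p.-1)
  | k'.+1 => gmul (r k'.+1) (a2aux p r f k')
  end.
Definition a2 (B : Grp) (p : nat) (r : nat -> B) (f : B) (i : nat) : B :=
  a2aux p r f i.-1.

Definition a1p (B : Grp) (p : nat) (r : nat -> B) (f g : B) : B :=
  gconj g (ginv (a2 p r f p)).

From mathcomp Require Import all_boot all_algebra.
Import GRing.Theory.

(* The commutator of (a_1,...,a_p)sigma with a base element (b_1,...,b_p) is
   the base element with entries a_i b_(i+1) a_i^-1 b_i^-1.  For i < p we have
   a_(1,i) = e and the entry is a_(2,i+1) a_(2,i)^-1 = r_i.  In the last entry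
   the index wraps around to a_(2,1); unwinding the recursion gives
   a_(2,p) = f^-1 P^-1 with P = r_1^-1 ... r_(p-1)^-1, which conjugates
   a_(2,1) = P f^-1 P^-1 back to f^-1, and the entry collapses to P [f,g]. *)

Section GroupLemmas.

Variable B : Grp.
Implicit Types x y u v f g P : B.

Lemma gmulrV x : gmul x (ginv x) = gone B.
Proof.
rewrite -[gmul x _]gmul1 -(gmulV (ginv x)) -gmulA (gmulA (ginv x) x).
by rewrite gmulV gmul1.
Qed.

Lemma gmulr1 x : gmul x (gone B) = x.
Proof. by rewrite -(gmulV x) gmulA gmulrV gmul1. Qed.

Lemma ginv_unique x y : gmul x y = gone B -> ginv x = y.
Proof. by move=> xy1; rewrite -[ginv x]gmulr1 -xy1 gmulA gmulV gmul1. Qed.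

Lemma ginv1 : ginv (gone B) = gone B.
Proof. exact/ginv_unique/gmul1. Qed.

Lemma ginvK x : ginv (ginv x) = x.
Proof. exact/ginv_unique/gmulV. Qed.

Lemma ginvM x y : ginv (gmul x y) = gmul (ginv y) (ginv x).
Proof.
by apply: ginv_unique; rewrite gmulA -(gmulA x) gmulrV gmulr1 gmulrV.
Qed.

Lemma gmulK x y : gmul (gmul x y) (ginv y) = x.
Proof. by rewrite -gmulA gmulrV gmulr1. Qed.

Lemma gmulVK x y : gmul (gmul x (ginv y)) y = x.
Proof. by rewrite -gmulA gmulV gmulr1. Qed.

Lemma gconjg1 x : gconj x (gone B) = x.
Proof. by rewrite /gconj gmul1 ginv1 gmulr1. Qed.

Lemma gconjgg x : gconj x x = x.
Proof. exact: gmulK. Qed.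

Lemma gconjM x u v : gconj x (gmul u v) = gconj (gconj x v) u.
Proof. by rewrite /gconj ginvM !gmulA. Qed.

Lemma gconj_wrap f g P :
  let b := gmul (ginv f) (ginv P) in
  gmul (gconj (gconj (ginv f) P) (gconj g (ginv b))) (ginv b) =
  gmul P (gcomm f g).
Proof.
move=> b; have bP : gmul b P = ginv f by rewrite gmulVK.
rewrite [gconj g _]/gconj ginvK gconjM -[gconj (gconj _ P) b]gconjM bP.
by rewrite gconjgg /gconj /gcomm /b !ginvM !ginvK !gmulA !gmulVK.
Qed.

End GroupLemmas.

Lemma wcomm_sigma_base (B : Grp) (p : nat) (a b : {ffun 'Z_p -> B}) :
  wcomm (a, 1%R) (b, 0%R) =
  ([ffun i => gmul (gconj (b (i + 1)%R) (a i)) (ginv (b i))], 0%R).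
Proof.
rewrite /wcomm /wmul /winv /=; congr pair; last by rewrite addr0 subr0 subrr.
by apply/ffunP => i; rewrite !ffunE !addr0 addrK subrr addr0 subr0.
Qed.

Lemma val_Zp_last {n : nat} {j : 'Z_n.+2} : n.+1 <= j -> (j : nat) = n.+1.
Proof. by move=> j_ge; apply/anti_leq; rewrite j_ge andbT -ltnS ltn_ord. Qed.

Lemma val_Zp_succ (n : nat) (j : 'Z_n.+2) :
  ((j + 1)%R : nat) = if j < n.+1 then j.+1 else 0.
Proof.
rewrite add_Zp_1 /=; case: ltnP => [j_lt | /val_Zp_last ->].
  by rewrite modn_small.
exact: modnn.
Qed.

Section A2.

Variables (B : Grp) (p : nat) (r : nat -> B) (f : B).

Lemma a2_first : a2 p r f 1 = gconj (ginv f) (prodinv r p.-1).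
Proof. by []. Qed.

Lemma a2S (i : nat) : a2 p r f i.+2 = gmul (r i.+1) (a2 p r f i.+1).
Proof. by []. Qed.

Lemma a2auxE (k : nat) :
  a2aux p r f k = gmul (ginv (prodinv r k)) (a2aux p r f 0).
Proof.
elim: k => [|k IHk] /=; first by rewrite ginv1 gmul1.
by rewrite IHk ginvM ginvK gmulA.
Qed.

Lemma a2_last : a2 p r f p = gmul (ginv f) (ginv (prodinv r p.-1)).
Proof. by rewrite /a2 a2auxE /= /gconj !gmulA gmulV gmul1. Qed.

End A2.

Theorem mainTheorem3 (B : Grp) (p : nat) (hp : 2 <= p)
  (r : nat -> B) (f g : B) :
  let w : wr B p :=
    ([ffun j : 'Z_p => if (j : nat) < p.-1 then r (j : nat).+1
                       else gmul (prodinv r p.-1) (gcomm f g)], 0%R) in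
  let x : wr B p :=
    ([ffun j : 'Z_p => if (j : nat) < p.-1 then gone B else a1p p r f g], 1%R) in
  let y : wr B p := ([ffun j : 'Z_p => a2 p r f (j : nat).+1], 0%R) in
  w = wcomm x y.
Proof.
case: p hp => [|[|n]] // _ w x y.
rewrite {}/w {}/x {}/y wcomm_sigma_base; congr pair.
apply/ffunP => j; rewrite !ffunE val_Zp_succ; case: ltnP => [_ | j_ge].
  by rewrite gconjg1 a2S gmulK.
by rewrite /a1p (val_Zp_last j_ge) a2_first a2_last gconj_wrap.
Qed.
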